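(* Let $P$ be a finite partial IP loop with $3\mid o_3(P)$. Then there exists a finite partial IP loop $Q\ge P$ satisfying all of: $3\mid o_3(Q)$, $\#Q\ge 10$, $\#Q\equiv 4\pmod 6$, and $\Gamma(Q)\subseteq O_2(Q)\times O_2(Q)$.
   Context: A partial IP loop is a set $P$ with a partial binary operation $(x,y)\mapsto xy$ defined on a subset $D(P)\subseteq P\times P$ (the domain) such that: (1) there is $1\in P$ with $(1,x),(x,1)\in D(P)$ and $1x=x1=x$ for all $x\in P$; (2) for each $x\in P$ there is a unique $y\in P$, denoted $x^{-1}$, with $(x,y),(y,x)\in D(P)$ and $xy=yx=1$; (3) whenever $(x,y)\in D(P)$, we have $(x^{-1},xy),(xy,y^{-1})\in D(P)$ and $x^{-1}(xy)=y$, $(xy)y^{-1}=x$. A partial IP loop $(Q,* )$ extends $(P,\cdot)$ (written $P\le Q$) if $P\subseteq Q$, $D(P)\subseteq D(Q)$ and $x\cdot y=x*y$ for all $(x,y)\in D(P)$. The set of gaps is $\Gamma(P)=(P\times P)\setminus D(P)$. $O_2(P)=\{x\in P: (x,x)\in D(P),\ x\ne 1,\ xx=1\}$; $O_3(P)=\{x\in P: (x,x)\in D(P),\ (x,xx)\in D(P),\ x\neq 1,\ x(xx)=1\}$ and $o_3(P)=\#O_3(P)$. *)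

From mathcomp Require Import all_boot.
Set Implicit Arguments. Unset Strict Implicit. Unset Printing Implicit Defensive.

(* A partial binary operation on a finite carrier T is op : T -> T -> option T;
   (x,y) \in D(P) iff op x y <> None, and then xy is the value. *)

Definition in_dom (T : Type) (op : T -> T -> option T) (x y : T) : Prop :=
  exists z, op x y = Some z.

Definition is_inv (T : Type) (op : T -> T -> option T) (e x y : T) : Prop :=
  op x y = Some e /\ op y x = Some e.

Definition partial_IP_loop (T : Type) (op : T -> T -> option T) (e : T) : Prop :=
  (forall x, op e x = Some x /\ op x e = Some x) /\
  (forall x, exists y, is_inv op e x y /\ forall y', is_inv op e x y' -> y' = y) /\
  (forall x y z, op x y = Some z ->
     (forall x', is_inv op e x x' -> op x' z = Some y) /\
     (forall y', is_inv op e y y' -> op z y' = Some x)).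

Definition extends (T U : Type) (opP : T -> T -> option T)
    (opQ : U -> U -> option U) (f : T -> U) : Prop :=
  injective f /\
  forall x y z, opP x y = Some z -> opQ (f x) (f y) = Some (f z).

Definition O2 (T : finType) (op : T -> T -> option T) (e : T) : {set T} :=
  [set x | (x != e) && (op x x == Some e)].

Definition O3 (T : finType) (op : T -> T -> option T) (e : T) : {set T} :=
  [set x | (x != e) &&
     (match op x x with
      | Some xx => op x xx == Some e
      | None => false
      end)].

Definition o3 (T : finType) (op : T -> T -> option T) (e : T) : nat :=
  #|O3 op e|.

Definition gaps_in_O2 (T : finType) (op : T -> T -> option T) (e : T) : Prop :=
  forall x y, op x y = None -> x \in O2 op e /\ y \in O2 op e.

(* The loop [T] is embedded into [T + S], where every new element [s] satisfies
   [s s = 1].  Each gap [(p, q)] of [T] receives a new element as its product,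
   and every non-involution [a] of [T] acts on [S = fiber * Z] by translating
   the [Z]-coordinate by a colour [c a] of a cyclic group [Z].  The colours
   satisfy [c a^-1 = - c a], are injective, nonzero and never twice another
   colour; this makes the extended product well defined, with unique inverses
   and the inverse property.  Products left undefined are then only those of
   an involution of [T] with a new element, or of two new elements, so all gaps
   lie in [O_2], while [O_3] does not change.  Taking [#|Z| = 1 (mod 6)] and
   padding the set of fibers brings [#|T + S|] to [4 (mod 6)]. *)

From mathcomp Require Import all_boot ssralg finalg zmodp zify.
Set Implicit Arguments. Unset Strict Implicit. Unset Printing Implicit Defensive.

Import GRing.Theory.

Section SignedNat.
Variable k : nat.
Hypothesis k_gt1 : 1 < k.

Definition sgnZ (s : bool) (n : nat) : 'Z_k := if s then n%:R%R else (- n%:R)%R.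

Lemma natZ_inj m n : m < k -> n < k -> (m%:R : 'Z_k)%R = n%:R%R -> m = n.
Proof. by move=> ltmk ltnk /(congr1 (@nat_of_ord _)); rewrite !val_Zp_nat // !modn_small. Qed.

Lemma sgnZ_inj s1 s2 m n : 0 < m + n < k -> sgnZ s1 m = sgnZ s2 n -> s1 = s2 /\ m = n.
Proof.
case/andP=> mn_gt0 mn_lt.
have ltmk : m < k by apply: leq_ltn_trans mn_lt; apply: leq_addr.
have ltnk : n < k by apply: leq_ltn_trans mn_lt; apply: leq_addl.
have mnZ_neq0 : ((m + n)%:R : 'Z_k)%R != 0%R.
  by apply/eqP => /(natZ_inj mn_lt (ltnW k_gt1)) mn0; rewrite mn0 in mn_gt0.
case: s1; case: s2; rewrite /sgnZ => E.
- by split => //; apply: natZ_inj.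
- by move: mnZ_neq0; rewrite natrD E addNr eqxx.
- by move: mnZ_neq0; rewrite natrD -E addrN eqxx.
- by split => //; apply: natZ_inj => //; apply: oppr_inj.
Qed.

Lemma sgnZN s n : (- sgnZ s n)%R = sgnZ (~~ s) n.
Proof. by case: s; rewrite /sgnZ ?opprK. Qed.

Lemma sgnZD s m n : (sgnZ s m + sgnZ s n)%R = sgnZ s (m + n).
Proof. by case: s; rewrite /sgnZ natrD // opprD. Qed.

End SignedNat.

(* Odd values rule out [color x = 2 color y], and [6 #|T| <= k] prevents
   wrap-around modulo [k]. *)
Section Coloring.
Variables (T : finType) (inv : T -> T) (k : nat).
Hypotheses (invK : involutive inv) (k_gt1 : 1 < k) (k_big : 6 * #|T| <= k).

Let rk (x : T) : nat := enum_rank x.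

Definition color x : 'Z_k :=
  sgnZ k (rk x < rk (inv x)) (2 * minn (rk x) (rk (inv x))).+1.

Let odd_lt x : (2 * minn (rk x) (rk (inv x))).+1 < 2 * #|T|.
Proof.
have : rk x < #|T| := ltn_ord _.
lia.
Qed.

Lemma color_neq0 x : color x != 0%R.
Proof.
have zero : sgnZ k true 0 = 0%R by rewrite /sgnZ mulr0n.
apply/eqP; rewrite -zero => /(sgnZ_inj k_gt1) [] //.
by have := odd_lt x; lia.
Qed.

Lemma colorV x : inv x != x -> color (inv x) = (- color x)%R.
Proof.
move=> invx_neq; rewrite /color sgnZN invK minnC; congr sgnZ.
have : rk (inv x) != rk x by apply: contra invx_neq => /eqP/val_inj/enum_rank_inj ->.
by case: ltngtP.
Qed.

Lemma color_inj : injective color.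
Proof.
move=> x y /(sgnZ_inj k_gt1) [].
  by have := odd_lt x; have := odd_lt y; lia.
case: (ltnP (rk x) (rk (inv x))); case: (ltnP (rk y) (rk (inv y))) => //= ley lex _ eq_u.
- by have /val_inj/enum_rank_inj : rk x = rk y by lia.
- have /val_inj/enum_rank_inj : rk (inv x) = rk (inv y) by lia.
  by move/(congr1 inv); rewrite !invK.
Qed.

Lemma color_neq_double x y : color x != (color y + color y)%R.
Proof.
rewrite /color sgnZD; apply/eqP => /(sgnZ_inj k_gt1) [|_];
  by have := odd_lt x; have := odd_lt y; lia.
Qed.

End Coloring.

Section SetBijection.
Variable T : finType.

Definition set_bij (A B : {set T}) (x : T) := nth x (enum B) (index x (enum A)).

Lemma set_bijP (A B : {set T}) x : #|A| = #|B| -> x \in A ->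
  set_bij A B x \in B /\ set_bij B A (set_bij A B x) = x.
Proof.
move=> eqAB Ax; rewrite /set_bij.
have ltxB : index x (enum A) < size (enum B) by rewrite -cardE -eqAB cardE index_mem mem_enum.
split; first by rewrite -mem_enum mem_nth.
rewrite index_uniq ?enum_uniq // (set_nth_default x) ?nth_index ?mem_enum //.
by rewrite -cardE eqAB cardE.
Qed.

End SetBijection.

Section PartialIPLoop.
Variables (T : finType) (op : T -> T -> option T) (e : T).
Hypothesis loopP : partial_IP_loop op e.

Definition pinv x := odflt x [pick y | (op x y == Some e) && (op y x == Some e)].
Local Notation inv := pinv.

Lemma is_inv_pinv x : is_inv op e x (inv x).
Proof.
rewrite /pinv; case: pickP => [y /andP[/eqP xy /eqP yx] | noinv] //=.
case: loopP => _ [/(_ x) [y [[xy yx] _]] _].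
by move: (noinv y); rewrite xy yx !eqxx.
Qed.

Lemma pinv_uniq x y : is_inv op e x y -> y = inv x.
Proof.
case: loopP => _ [/(_ x) [z [_ uniq_z]] _] inv_y.
by rewrite (uniq_z _ inv_y) (uniq_z _ (is_inv_pinv x)).
Qed.

Lemma op_pinv x : op x (inv x) = Some e. Proof. by case: (is_inv_pinv x). Qed.
Lemma op_pinvl x : op (inv x) x = Some e. Proof. by case: (is_inv_pinv x). Qed.

Lemma pinvK : involutive inv.
Proof. by move=> x; apply/esym/pinv_uniq; split; [apply: op_pinvl | apply: op_pinv]. Qed.

Lemma op1x x : op e x = Some x. Proof. by case: loopP => /(_ x) []. Qed.
Lemma opx1 x : op x e = Some x. Proof. by case: loopP => /(_ x) []. Qed.

Lemma pinv1 : inv e = e.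
Proof. by apply/esym/pinv_uniq; split; apply: op1x. Qed.

Lemma pinv_eq1 x : (inv x == e) = (x == e).
Proof. by rewrite -{1}pinv1 (inj_eq (can_inj pinvK)). Qed.

Lemma op_invKl x y z : op x y = Some z -> op (inv x) z = Some y.
Proof. by case: loopP => _ [_ ip] /ip [ipl _]; apply/ipl/is_inv_pinv. Qed.

Lemma op_invKr x y z : op x y = Some z -> op z (inv y) = Some x.
Proof. by case: loopP => _ [_ ip] /ip [_ ipr]; apply/ipr/is_inv_pinv. Qed.

Lemma op_eq1 x y : op x y = Some e -> y = inv x.
Proof. by move/op_invKr; rewrite op1x => -[<-]; rewrite pinvK. Qed.

Lemma gap_inv p q : op p q = None -> op (inv q) (inv p) = None.
Proof.
move=> gap_pq; case qp: (op (inv q) (inv p)) => [w|] //.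
by move/op_invKr: qp; rewrite pinvK => /op_invKl/op_invKr; rewrite pinvK gap_pq.
Qed.

Lemma gap_neq p q : op p q = None -> [/\ p != e, q != e & q != inv p].
Proof.
move=> gap_pq; split; apply/eqP => E; move: gap_pq; rewrite E.
- by rewrite op1x.
- by rewrite opx1.
- by rewrite op_pinv.
Qed.

Definition noninvolution a := (a != e) && (op a a != Some e).

Lemma noninvolution_pinv_neq a : noninvolution a -> inv a != a.
Proof. by case/andP=> _; apply: contra => /eqP ia; rewrite -{2}ia op_pinv. Qed.

Lemma noninvolution_pinv a : noninvolution a -> noninvolution (inv a).
Proof.
move=> na; have := noninvolution_pinv_neq na.
case/andP: na => a_neq1 _; rewrite /noninvolution pinv_eq1 a_neq1.
by apply: contra => /eqP/op_eq1; rewrite pinvK => ->.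
Qed.

(* Extension of [T] by a set [S] of involutions: [ract a s] is the product
   [s a], which lies in [S] or in [T] (the latter exactly when [s] is the
   product [fill p q] of a gap of [T]); [a s] is then [(s a^-1)^-1]. *)
Section Extension.
Variables (S : finType) (fill : T -> T -> S) (ract : T -> S -> option (T + S)).
Hypothesis ract_inv : forall a s t,
  a != e -> ract a s = Some (inr t) -> ract (inv a) t = Some (inr s).
Hypothesis ract_inl : forall a s b, a != e -> ract a s = Some (inl b) ->
  [/\ op a (inv b) = None, s = fill a (inv b) & ract b s = Some (inl a)].
Hypothesis ract_fill : forall p q,
  op p q = None -> ract p (fill p q) = Some (inl (inv q)).
Hypothesis fill_flip : forall p q, op p q = None -> fill p q = fill (inv q) (inv p).
Hypothesis ract_inj : forall a b s t, a != e -> b != e ->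
  ract a s = Some (inr t) -> ract b s = Some (inr t) -> a = b.
Hypothesis ract_neq : forall a s t, a != e -> ract a s = Some (inr t) -> t != s.

Definition ext_inv (u : T + S) : T + S := if u is inl a then inl (inv a) else u.

Definition ext_op (u v : T + S) : option (T + S) :=
  match u, v with
  | inl a, inl b => if op a b is Some c then Some (inl c) else Some (inr (fill a b))
  | inl a, inr s => if a == e then Some (inr s) else omap ext_inv (ract (inv a) s)
  | inr s, inl a => if a == e then Some (inr s) else ract a s
  | inr s, inr t => if s == t then Some (inl e)
                    else omap inl [pick a | (a != e) && (ract a s == Some (inr t))]
  end.

Lemma ract_inl_neq1 a s b : a != e -> ract a s = Some (inl b) -> b != e.
Proof.
move=> a_neq1 /(ract_inl a_neq1) [gap _ _]; apply/eqP => b1.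
by rewrite b1 pinv1 opx1 in gap.
Qed.

Lemma pick_ract a s t : a != e -> ract a s = Some (inr t) ->
  [pick b | (b != e) && (ract b s == Some (inr t))] = Some a.
Proof.
move=> a_neq1 sat; case: pickP => [b /andP[b_neq1 /eqP sbt] | none].
  by rewrite (ract_inj b_neq1 a_neq1 sbt sat).
by move: (none a); rewrite a_neq1 sat eqxx.
Qed.

Lemma ext_op_invK u v w :
  ext_op u v = Some w -> ext_op (ext_inv u) w = Some v /\ ext_op w (ext_inv v) = Some u.
Proof.
have inv_neq1 a : a != e -> inv a != e by rewrite pinv_eq1.
case: u => [a|s]; case: v => [b|t] /=.
- case ab: (op a b) => [c|] [<-] /=; first by rewrite (op_invKl ab) (op_invKr ab).
  case: (gap_neq ab) => a_neq1 b_neq1 _.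
  rewrite !(negbTE (inv_neq1 _ _)) // pinvK ract_fill //= pinvK; split => //.
  by rewrite fill_flip // ract_fill ?pinvK //; apply: gap_inv.
- case: eqP => [-> [<-]|/eqP a_neq1]; first by rewrite /= pinv1 !eqxx.
  have ia_neq1 := inv_neq1 _ a_neq1.
  case sat: (ract (inv a) t) => [[b|s']|] //= [<-] /=.
    have b_neq1 := ract_inl_neq1 ia_neq1 sat.
    case: (ract_inl ia_neq1 sat) => gap fillt tb.
    by rewrite gap -fillt (negbTE (inv_neq1 _ b_neq1)) pinvK tb /= pinvK.
  have ts' := ract_inv ia_neq1 sat; rewrite pinvK in ts'.
  rewrite (negbTE ia_neq1) pinvK eq_sym (negbTE (ract_neq a_neq1 ts')).
  by rewrite ts' /= (pick_ract a_neq1 ts').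
- case: eqP => [-> [<-]|/eqP a_neq1]; first by rewrite /= pinv1 !eqxx.
  case sa: (ract b s) => [[c|s']|] //= [<-] /=.
    case: (ract_inl a_neq1 sa) => gap fills sc.
    rewrite (negbTE (ract_inl_neq1 a_neq1 sa)) sc; split => //.
    have gap' := gap_inv gap; rewrite pinvK in gap'.
    by rewrite gap' fills fill_flip // pinvK.
  rewrite eq_sym (negbTE (ract_neq a_neq1 sa)) (pick_ract a_neq1 sa) /=.
  by rewrite (negbTE (inv_neq1 _ a_neq1)) (ract_inv a_neq1 sa).
- case: eqP => [-> [<-]|/eqP st]; first by rewrite /= !eqxx.
  case: pickP => [a /andP[a_neq1 /eqP sat]|] //= [<-] /=.
  by rewrite (negbTE a_neq1) sat (ract_inv a_neq1 sat).
Qed.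

Lemma ext_inv_uniq u v : is_inv ext_op (inl e) u v -> v = ext_inv u.
Proof.
case: u => [a|s]; case: v => [b|t]; rewrite /is_inv /= => -[uv vu].
- move: uv vu; case ab: (op a b) => [c|] // [c1]; case ba: (op b a) => [d|] // [d1].
  by subst; rewrite -(pinv_uniq (conj ab ba)).
- move: uv; case: eqP => // /eqP a_neq1.
  case sat: (ract (inv a) t) => [[c|s']|] //= [c1].
  have ia_neq1 : inv a != e by rewrite pinv_eq1.
  by move: (ract_inl_neq1 ia_neq1 sat); rewrite -pinv_eq1 c1 eqxx.
- move: uv; case: eqP => // /eqP b_neq1 sb.
  by move: (ract_inl_neq1 b_neq1 sb); rewrite eqxx.
- move: uv; case: eqP => [->//|_].
  by case: pickP => [a /andP[a_neq1 _]|] //= [a1]; rewrite a1 eqxx in a_neq1.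
Qed.

Lemma ext_loop : partial_IP_loop ext_op (inl e).
Proof.
split; [|split].
- by case=> [a|s] /=; rewrite ?op1x ?opx1 ?eqxx.
- move=> u; exists (ext_inv u); split; last by move=> y /ext_inv_uniq.
  by case: u => [a|s]; rewrite /is_inv /= ?op_pinv ?op_pinvl ?eqxx.
- move=> u v w /ext_op_invK [uw wv]; split => x' /ext_inv_uniq -> //.
Qed.

Lemma ext_extends : extends op ext_op inl.
Proof. by split=> [x y [] | x y z /= ->]. Qed.

Lemma ext_O3 : O3 ext_op (inl e) = inl @: O3 op e.
Proof.
have inl_inj : injective (@inl T S) by move=> x y [].
apply/setP => -[a|s]; last first.
  by rewrite !inE /= !eqxx; apply/esym/imsetP => -[].
rewrite mem_imset // !inE /= (inj_eq inl_inj).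
case: eqP => //= /eqP a_neq1; case aa: (op a a) => [c|] /=.
  by case: (op a c) => //= d; rewrite (inj_eq (@Some_inj _)) (inj_eq inl_inj).
case sat: (ract (inv a) (fill a a)) => [[b|s']|] //=.
have ia_neq1 : inv a != e by rewrite pinv_eq1.
apply/negbTE; rewrite (inj_eq (@Some_inj _)) (inj_eq inl_inj) pinv_eq1.
exact: ract_inl_neq1 ia_neq1 sat.
Qed.

Hypothesis ract_None : forall a s, a != e -> ract a s = None -> op a a = Some e.

Lemma ext_gaps : gaps_in_O2 ext_op (inl e).
Proof.
have S_O2 s : inr s \in O2 ext_op (inl e) by rewrite inE /= eqxx.
have T_O2 a : a != e -> op a a = Some e -> inl a \in O2 ext_op (inl e).
  by move=> a_neq1 aa; rewrite inE /= aa eqxx andbT.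
case=> [a|s]; case=> [b|t] /=.
- by case: (op a b).
- case: eqP => // /eqP a_neq1.
  case sat: (ract (inv a) t) => [w|] // _; split => //.
  have ia_neq1 : inv a != e by rewrite pinv_eq1.
  have := op_eq1 (ract_None ia_neq1 sat); rewrite pinvK => iia.
  by apply: T_O2 => //; rewrite -{2}iia op_pinv.
- by case: eqP => // /eqP a_neq1 sa; split => //; apply: T_O2 a_neq1 (ract_None a_neq1 sa).
- by move=> _; split.
Qed.

End Extension.

Section GapOrbits.
Variable Pad : finType.

Definition flip (g : T * T) := (inv g.2, inv g.1).

Definition gap_orbitb (A : {set T * T}) :=
  [exists g : T * T, (op g.1 g.2 == None) && (A == [set g; flip g])].

(* A fiber index is either a gap orbit [{(p, q), (q^-1, p^-1)}] or padding. *)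
Definition fiber := ({set T * T} + Pad)%type.

Definition in_orbit (j : fiber) p q :=
  if j is inl A then gap_orbitb A && ((p, q) \in A) else false.

Definition orbit p q : fiber := inl [set (p, q); flip (p, q)].

Lemma flipK : involutive flip.
Proof. by case=> p q; rewrite /flip /= !pinvK. Qed.

Lemma gap_flip g : op g.1 g.2 = None -> op (flip g).1 (flip g).2 = None.
Proof. by case: g => p q /= /gap_inv. Qed.

Lemma in_orbitP j p q : in_orbit j p q ->
  exists2 g, op g.1 g.2 = None & j = inl [set g; flip g] /\ ((p, q) = g \/ (p, q) = flip g).
Proof.
case: j => [A|//] /andP[/existsP[g /andP[/eqP gap /eqP ->]]].
by rewrite !inE => /orP[/eqP ->|/eqP ->]; exists g; auto.
Qed.

Lemma in_orbit_gap j p q : in_orbit j p q -> op p q = None.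
Proof.
case/in_orbitP => -[g1 g2] gap [_ [[-> ->] //|pq_flip]].
by have := gap_flip gap; rewrite -pq_flip.
Qed.

Lemma orbit_in p q : op p q = None -> in_orbit (orbit p q) p q.
Proof.
move=> gap; rewrite /= !inE eqxx andbT; apply/existsP; exists (p, q).
by rewrite /= gap !eqxx.
Qed.

Lemma orbit_flip p q : orbit p q = orbit (inv q) (inv p).
Proof. by rewrite /orbit /flip /= !pinvK setUC. Qed.

Lemma in_orbitE j p q : in_orbit j p q -> j = orbit p q.
Proof.
case/in_orbitP => g _ [-> [pq_g|pq_flip]]; rewrite /orbit ?pq_g ?pq_flip //.
by rewrite flipK setUC.
Qed.

Lemma in_orbit_flip j p q : in_orbit j p q -> in_orbit j (inv q) (inv p).
Proof.
move=> pq_j; rewrite (in_orbitE pq_j) orbit_flip.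
exact/orbit_in/gap_inv/(in_orbit_gap pq_j).
Qed.

Lemma in_orbit_fst j p q q' : in_orbit j p q -> in_orbit j p q' -> q = q'.
Proof.
move=> pq_j pq'_j; have gap := in_orbit_gap pq_j.
have [orbit_eq] := etrans (esym (in_orbitE pq_j)) (in_orbitE pq'_j).
have : (p, q') \in [set (p, q); flip (p, q)] by rewrite orbit_eq set21.
case/set2P => [[->] //|[p_eq _]].
by rewrite p_eq op_pinvl in gap.
Qed.

Lemma in_orbit_snd j p p' q : in_orbit j p q -> in_orbit j p' q -> p = p'.
Proof.
move=> pq_j p'q_j; have gap := in_orbit_gap pq_j.
have [orbit_eq] := etrans (esym (in_orbitE pq_j)) (in_orbitE p'q_j).
have : (p', q) \in [set (p, q); flip (p, q)] by rewrite orbit_eq set21.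
case/set2P => [[->] //|[_ q_eq]].
by rewrite q_eq op_pinv in gap.
Qed.

Lemma pick_in_orbit_snd j p q : in_orbit j p q -> [pick b | in_orbit j p b] = Some q.
Proof.
move=> pq_j; case: pickP => [b pb_j|none]; first by rewrite (in_orbit_fst pb_j pq_j).
by move: (none q); rewrite pq_j.
Qed.

Lemma pick_in_orbit_fst j p q : in_orbit j p q -> [pick d | in_orbit j d q] = Some p.
Proof.
move=> pq_j; case: pickP => [d dq_j|none]; first by rewrite (in_orbit_snd dq_j pq_j).
by move: (none p); rewrite pq_j.
Qed.

Definition left_gaps a := [set d | op d a == None].

Lemma card_left_gaps_le a : #|left_gaps a| <= #|left_gaps (inv a)|.
Proof.
suff : #|~: left_gaps (inv a)| <= #|~: left_gaps a|.
  by rewrite (cardsCs (left_gaps a)) (cardsCs (left_gaps (inv a))); lia.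
pose r d := odflt e (op d (inv a)).
have r_inj : {in ~: left_gaps (inv a) &, injective r}.
  move=> x y; rewrite !inE /r.
  case xa: (op x (inv a)) => [u|] //; case ya: (op y (inv a)) => [w|] //= _ _ uw.
  by move: (op_invKr xa) (op_invKr ya); rewrite pinvK uw => -> [].
rewrite -(card_in_imset r_inj); apply/subset_leq_card/subsetP => z /imsetP[x].
rewrite !inE /r; case xa: (op x (inv a)) => [u|] //= _ ->.
by have := op_invKr xa; rewrite pinvK => ->.
Qed.

Lemma card_left_gaps a : #|left_gaps a| = #|left_gaps (inv a)|.
Proof. by apply/eqP; rewrite eqn_leq card_left_gaps_le -{2}(pinvK a) card_left_gaps_le. Qed.

Definition gap_swap a d := set_bij (left_gaps a) (left_gaps (inv a)) d.

Lemma gap_swap_gap a d : op d a = None -> op (gap_swap a d) (inv a) = None.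
Proof.
move=> gap; have d_gap : d \in left_gaps a by rewrite inE gap.
by case: (set_bijP (card_left_gaps a) d_gap); rewrite inE => /eqP.
Qed.

Lemma gap_swapK a d : op d a = None -> gap_swap (inv a) (gap_swap a d) = d.
Proof.
move=> gap; have d_gap : d \in left_gaps a by rewrite inE gap.
by rewrite /gap_swap pinvK; case: (set_bijP (card_left_gaps a) d_gap).
Qed.

(* A non-involution [a] acts on each fiber by
   the translation [n |-> n + c a]; the point [(j, 0)] of a gap orbit [j] is the
   missing product of that gap, and the translate that would land on it is
   redirected to the partner fiber given by [gap_swap]. *)
Section Translation.
Variables (Z : finZmodType) (c : T -> Z).
Hypothesis c_neq0 : forall a, noninvolution a -> c a != 0%R.
Hypothesis cV : forall a, noninvolution a -> c (inv a) = (- c a)%R.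
Hypothesis c_inj : forall a b, noninvolution a -> noninvolution b -> c a = c b -> a = b.
Hypothesis c_neq_double : forall a b,
  noninvolution a -> noninvolution b -> c a != (c b + c b)%R.

Definition fill p q : fiber * Z := (orbit p q, 0%R).

Definition translate a j n : option (T + fiber * Z) :=
  if ~~ noninvolution a then None
  else if ([pick d | in_orbit j d a], n == - c a)%R is (Some d, true)
  then Some (inr (orbit (gap_swap a d) (inv a), c a))
  else Some (inr (j, n + c a)%R).

Definition ract a (s : fiber * Z) : option (T + fiber * Z) :=
  let: (j, n) := s in
  if ([pick b | in_orbit j a b], n == 0%R) is (Some b, true) then Some (inl (inv b))
  else translate a j n.

Definition at_fill a j (n : Z) := n = 0%R /\ exists b, in_orbit j a b.
Definition crossing a j n := exists d, in_orbit j d a /\ n = (- c a)%R.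

Lemma translate_inl a j n b : translate a j n <> Some (inl b).
Proof. by rewrite /translate; case: ifP => // _; case: pickP => [d _|_] //=; case: eqP. Qed.

Lemma translate_None a j n : translate a j n = None -> ~~ noninvolution a.
Proof. by rewrite /translate; case: ifP => // _; case: pickP => [d _|_] //=; case: eqP. Qed.

Lemma ract_fillE a j b : in_orbit j a b -> ract a (j, 0%R) = Some (inl (inv b)).
Proof. by move=> ab_j; rewrite /= (pick_in_orbit_snd ab_j) eqxx. Qed.

Lemma ract_crossE a j n d : noninvolution a -> in_orbit j d a -> n = (- c a)%R ->
  ract a (j, n) = Some (inr (orbit (gap_swap a d) (inv a), c a)).
Proof.
move=> na da_j n_eq; rewrite /= /translate na (pick_in_orbit_fst da_j) n_eq eqxx.
by rewrite oppr_eq0 (negbTE (c_neq0 na)); case: pickP.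
Qed.

Lemma ract_shiftE a j n : noninvolution a -> ~ at_fill a j n -> ~ crossing a j n ->
  ract a (j, n) = Some (inr (j, n + c a)%R).
Proof.
move=> na no_fill no_cross; rewrite /= /translate na.
have [n0|_] := eqVneq n 0%R; have [n_eq|_] := eqVneq n (- c a)%R.
all: case: pickP => [b ab_j|_]; try by case: no_fill; split => //; exists b.
all: case: pickP => [d da_j|_] //; by case: no_cross; exists d.
Qed.

Lemma ract_inrP a j n t : ract a (j, n) = Some (inr t) -> noninvolution a /\
  ((exists d, [/\ in_orbit j d a, n = (- c a)%R & t = (orbit (gap_swap a d) (inv a), c a)])
   \/ [/\ t = (j, n + c a)%R, ~ at_fill a j n & ~ crossing a j n]).
Proof.
rewrite /= /translate; have [n0|n_neq0] := eqVneq n 0%R; have [n_eq|n_neq] := eqVneq n (- c a)%R.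
all: case: pickP => [b ab_j|no_b] //; case: ifP => // /negbFE na rt; split => //.
all: move: rt; case: pickP => [d da_j|no_d] [<-]; try by left; exists d.
all: right; split => // => [[n0' [b' ab'_j]] | [d' [d'a_j n_eq']]].
all: by [ move: (no_b b'); rewrite ab'_j | move: (no_d d'); rewrite d'a_j
        | move: n_neq0; rewrite n0' eqxx | move: n_neq; rewrite n_eq' eqxx].
Qed.

Lemma ract_inlP a j n b : ract a (j, n) = Some (inl b) -> n = 0%R /\ in_orbit j a (inv b).
Proof.
rewrite /=; case: pickP => [b' ab'_j|_] /=; last by move/translate_inl.
by case: eqP => [-> [<-]|_ /translate_inl //]; rewrite pinvK.
Qed.

Lemma ract_inl a s b : a != e -> ract a s = Some (inl b) ->
  [/\ op a (inv b) = None, s = fill a (inv b) & ract b s = Some (inl a)].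
Proof.
case: s => j n _ /ract_inlP [-> ab_j]; split.
- exact: in_orbit_gap ab_j.
- by rewrite /fill -(in_orbitE ab_j).
- by have := in_orbit_flip ab_j; rewrite pinvK => /ract_fillE ->; rewrite pinvK.
Qed.

Lemma ract_fill p q : op p q = None -> ract p (fill p q) = Some (inl (inv q)).
Proof. by move=> gap; apply/ract_fillE/orbit_in. Qed.

Lemma fill_flip p q : fill p q = fill (inv q) (inv p).
Proof. by rewrite /fill orbit_flip. Qed.

Lemma ract_inv a s t : a != e -> ract a s = Some (inr t) -> ract (inv a) t = Some (inr s).
Proof.
case: s => j n _ /ract_inrP [na [[d [da_j n_eq ->]] | [-> no_fill no_cross]]].
  have gap := in_orbit_gap da_j.
  rewrite (ract_crossE (noninvolution_pinv na) (orbit_in (gap_swap_gap gap))).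
    by rewrite gap_swapK // pinvK cV // -n_eq -(in_orbitE da_j).
  by rewrite cV // opprK.
rewrite ract_shiftE ?noninvolution_pinv //; first by rewrite cV // addrK.
- move=> [n_eq [b ab_j]]; apply: no_cross; exists (inv b).
  split; first by have := in_orbit_flip ab_j; rewrite pinvK.
  by apply/eqP; rewrite -addr_eq0 n_eq.
- move=> [d [da_j n_eq]]; apply: no_fill; split.
    by apply: (addIr (c a)); rewrite n_eq cV // opprK add0r.
  by exists (inv d); have := in_orbit_flip da_j; rewrite pinvK.
Qed.

Lemma ract_inj a b s t : a != e -> b != e ->
  ract a s = Some (inr t) -> ract b s = Some (inr t) -> a = b.
Proof.
case: s => j n _ _ /ract_inrP [na ca] /ract_inrP [nb cb].
case: ca cb => [[d [_ n_eq ->]] | [-> _ _]] [[d' [_ n_eq' t_eq]] | [t_eq _ _]]; case: t_eq.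
- by move=> _ /(c_inj na nb).
- by move=> _ cab; have := c_neq_double nb na; rewrite {2}cab n_eq addNKr eqxx.
- by move=> _ cba; have := c_neq_double na nb; rewrite -{2}cba n_eq' addNKr eqxx.
- by move/addrI/(c_inj na nb).
Qed.

Lemma ract_neq a s t : a != e -> ract a s = Some (inr t) -> t != s.
Proof.
case: s => j n _ /ract_inrP [na [[d [_ n_eq ->]] | [-> _ _]]]; apply/eqP => -[].
  move=> _ ca_eq; have nia := noninvolution_pinv na.
  have /(c_inj nia na) ia_eq : c (inv a) = c a by rewrite cV // -n_eq ca_eq.
  by have := noninvolution_pinv_neq na; rewrite ia_eq eqxx.
by move/(canRL (addKr n)); rewrite addNr => ca0; have := c_neq0 na; rewrite ca0 eqxx.
Qed.

Lemma ract_None a s : a != e -> ract a s = None -> op a a = Some e.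
Proof.
case: s => j n a_neq1 /= s_none.
have : ~~ noninvolution a.
  by move: s_none; case: pickP => [b _|_] /=; [case: eqP => // _|]; move/translate_None.
by rewrite /noninvolution a_neq1 negbK => /eqP.
Qed.

Theorem translation_extension (opQ := ext_op fill ract) :
  [/\ partial_IP_loop opQ (inl e), extends op opQ inl,
      o3 opQ (inl e) = o3 op e & gaps_in_O2 opQ (inl e)].
Proof.
split; first exact: ext_loop ract_inv ract_inl ract_fill (fun p q _ => fill_flip p q)
  ract_inj ract_neq.
- exact: ext_extends.
- by rewrite /o3 (ext_O3 ract_inl) card_imset //; move=> x y [].
- exact: ext_gaps ract_None.
Qed.

End Translation.

End GapOrbits.
End PartialIPLoop.

Lemma card_mod6 t N k : k %% 6 = 1 -> (t + (N + (4 + 5 * (t + N)) %% 6) * k) %% 6 = 4.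
Proof. by move=> k1; rewrite -modnDmr -modnMmr k1 muln1 modnDmr; lia. Qed.

Theorem proposition2 (T : finType) (op : T -> T -> option T) (e : T) :
  partial_IP_loop op e ->
  (3 %| o3 op e)%N ->
  exists (U : finType) (opQ : U -> U -> option U) (eQ : U) (f : T -> U),
    partial_IP_loop opQ eQ /\
    extends op opQ f /\
    (3 %| o3 opQ eQ)%N /\
    (10 <= #|U|)%N /\
    (#|U| %% 6 = 4)%N /\
    gaps_in_O2 opQ eQ.
Proof.
move=> loopP o3_dvd3.
pose k := (6 * #|T|.+1).+1.
have k_gt1 : 1 < k by rewrite ltnS muln_gt0.
have k_big : 6 * #|T| <= k by rewrite leqW // leq_pmul2l.
(* as [k = 1 (mod 6)], this padding gives [#|T| + #|fiber| * k = 4 (mod 6)] *)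
pose Pad := 'I_((4 + 5 * (#|T| + #|{set T * T}|)) %% 6).
pose c := color (pinv op e) k.
have [Q_loop Q_ext Q_o3 Q_gaps] := @translation_extension _ _ _ loopP Pad _ c
  (fun a _ => color_neq0 _ k_gt1 k_big a)
  (fun a na => colorV k (pinvK loopP) (noninvolution_pinv_neq loopP na))
  (fun a b _ _ => @color_inj _ _ _ (pinvK loopP) k_gt1 k_big a b)
  (fun a b _ _ => color_neq_double _ k_gt1 k_big a b).
do 4 eexists; split; first exact: Q_loop.
split; first exact: Q_ext.
split; first by rewrite Q_o3.
rewrite card_sum card_prod card_sum !card_ord Zp_cast //.
split; last split; last exact: Q_gaps.
  have N_gt0 : 0 < #|{set T * T}| by apply/card_gt0P; exists set0.
  have T_gt0 : 0 < #|T| by apply/card_gt0P; exists e.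
  apply: leq_trans (leq_addl _ _); apply: leq_trans (leq_pmull k (ltn_addr _ N_gt0)).
  by rewrite /k; lia.
by apply: card_mod6; rewrite /k; lia.
Qed.
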